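(* Let $m$ be an integer with $3\le m\le 6$. Then for every integer $n\ge m-1$, $$F_{n+2,2}\equiv F_{n,2}\pmod{2^m},$$ i.e. from the term of index $m-1$ onward the sequence $(F_{n,2}\bmod 2^m)_{n\ge0}$ is periodic with period $2$.
   Context: For positive integers $r\le m\le n$, $S_r(n,m)$ denotes the $r$-Stirling number of the second kind: the number of partitions of $\{1,\dots,n\}$ into $m$ non-empty blocks such that $1,\dots,r$ lie in pairwise distinct blocks. For a positive integer $r$ and integer $n\ge 0$, the $r$-Fubini number is $F_{n,r}=\sum_{k=0}^{n}(k+r)!\,S_r(n+r,k+r)$. *)

From mathcomp Require Import all_boot.
Set Implicit Arguments. Unset Strict Implicit. Unset Printing Implicit Defensive.

(* r-Stirling number of the second kind S_r(n,m): number of partitions of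
   {1,...,n} (modelled as 'I_n = {0,...,n-1}, element k+1 ~ ordinal k)
   into m non-empty blocks such that 1,...,r (ordinals of value < r)
   lie in pairwise distinct blocks. *)
Definition rstirling2 (r n m : nat) : nat :=
  #|[set P : {set {set 'I_n}} |
      [&& partition P [set: 'I_n], #|P| == m &
          [forall i : 'I_n, forall j : 'I_n,
             ((i < r) && (j < r) && (i != j)) ==> (pblock P i != pblock P j)]]]|.

Definition rfubini (n r : nat) : nat :=
  \sum_(0 <= k < n.+1) (k + r)`! * rstirling2 r (n + r) (k + r).

(* Inserting the last point into a partition of the first N points, either as a
   new singleton block or into one of the k existing blocks, gives the recurrence
   S_2(N+1, k+1) = S_2(N, k) + (k+1) S_2(N, k+1).  Hence F_{n,2} is the sum of the
   weights j! S_2(n+2, j), and modulo 64 only the weights with j < 8 survive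
   because 64 divides 8!.  The residues of these eight weights evolve under a
   fixed map, which is periodic with period 8 from n = 5 on; a finite
   computation then settles the congruence. *)

From mathcomp Require Import all_boot ring zify.
From Stdlib Require Import Lia.
Set Implicit Arguments. Unset Strict Implicit. Unset Printing Implicit Defensive.

Lemma partition_pblock_eq (T : finType) (D : {set T}) (P P' : {set {set T}}) :
  partition P D -> partition P' D -> {in D, pblock P =1 pblock P'} -> P = P'.
Proof.
move=> partP partP' eqP'; rewrite -(preim_partition_pblock partP).
rewrite -(preim_partition_pblock partP'); apply: eq_in_imset => x Dx.
by apply/setP => y; rewrite !inE; apply: andb_id2l => Dy; rewrite !eqP'.
Qed.

Lemma card_dep_pairs (I J : finType) (S : {set I}) (F : I -> {set J}) :
  #|[set p : I * J | (p.1 \in S) && (p.2 \in F p.1)]| = \sum_(i in S) #|F i|.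
Proof.
rewrite -sum1_card (eq_bigl (fun p => (p.1 \in S) && (p.2 \in F p.1))) => [|p]; last first.
  by rewrite inE.
rewrite -(pair_big_dep (mem S) (fun i => mem (F i)) (fun _ _ => 1)).
by apply: eq_bigr => i _; rewrite sum1_card.
Qed.

Definition sep_partitions (T : finType) (c0 c1 : T) (k : nat) : {set {set {set T}}} :=
  [set P | [&& partition P [set: T], #|P| == k & pblock P c0 != pblock P c1]].

Lemma sep_partitions0 (T : finType) (c0 c1 : T) : sep_partitions c0 c1 0 = set0.
Proof.
apply/setP => P; rewrite !inE cards_eq0; apply/negP => /and3P[partP /eqP P0 _].
by have := cover_partition partP; rewrite P0 /cover big_set0 => /setP/(_ c0); rewrite !inE.
Qed.

Section Extension.

Variables (A B : finType) (h : A -> B) (z : B).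
Hypothesis h_inj : injective h.
Hypothesis h_neq : forall a, h a != z.
Hypothesis h_onto : forall b, b != z -> exists a, b = h a.

(* [X = set0] encodes the insertion of [z] as a new singleton block. *)
Definition extend (Q : {set {set A}}) (X : {set A}) : {set {set B}} :=
  (z |: h @: X) |: [set h @: (Y : {set A}) | Y in Q :\ X].

Definition restrict (P : {set {set B}}) : {set {set A}} :=
  [set h @^-1: (Y : {set B}) | Y in P] :\ set0.

Definition zblock (P : {set {set B}}) : {set A} := h @^-1: pblock P z.

Lemma z_notin_imset (X : {set A}) : z \notin h @: X.
Proof. by apply/imsetP => -[a _ /eqP]; rewrite eq_sym (negbTE (h_neq a)). Qed.

Lemma imset_preimset (Y : {set B}) : h @: (h @^-1: Y) = Y :\ z.
Proof.
apply/setP => b; rewrite !inE; case: eqVneq => [->|/h_onto[a ->]].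
  exact/negbTE/z_notin_imset.
by rewrite mem_imset // inE.
Qed.

Lemma preimset_imset (X : {set A}) : h @^-1: (h @: X) = X.
Proof. by apply/setP => a; rewrite inE mem_imset. Qed.

Lemma preimset_zblock (X : {set A}) : h @^-1: (z |: h @: X) = X.
Proof. by apply/setP => a; rewrite !inE (negbTE (h_neq a)) mem_imset. Qed.

Section Extend.

Variables (Q : {set {set A}}) (X : {set A}).
Hypothesis partQ : partition Q [set: A].
Hypothesis QX : X \in set0 |: Q.

Lemma setD1_set0 : Q :\ set0 = Q.
Proof. by apply/setP => Y; rewrite !inE; case: eqVneq => // ->; rewrite (partition0 partQ). Qed.

Lemma partition_extend : partition (extend Q X) [set: B].
Proof.
have partQX : partition (Q :\ X) (~: X).
  case/setU1P: QX => [->|]; last by rewrite -setTD; apply: partitionD1.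
  by rewrite setC0 setD1_set0.
rewrite -(imset_partition _ _ h_inj) in partQX.
have -> : [set: B] = (z |: h @: X) :|: h @: (~: X).
  by rewrite -setUA -imsetU setUCr -(preimsetT h) imset_preimset setD1K.
apply: partitionU1 => //.
  by apply/set0Pn; exists z; rewrite setU11.
rewrite -setI_eq0; apply/eqP/setP => b; rewrite !inE.
case: eqVneq => [->|_] /=; first exact/negbTE/z_notin_imset.
by apply/andP => -[/imsetP[a aX ->]]; rewrite mem_imset // inE aX.
Qed.

Lemma card_extend : #|extend Q X| = #|Q| + (X == set0).
Proof.
rewrite cardsU1 card_imset; last exact: imset_inj.
have -> : (z |: h @: X) \notin [set h @: (Y : {set A}) | Y in Q :\ X].
  by apply/imsetP => -[Y _ E]; move: (z_notin_imset Y); rewrite -E setU11.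
rewrite (cardsD1 X Q) add1n addnC; case/setU1P: QX => [->|QX'].
  by rewrite (partition0 partQ) eqxx.
by rewrite QX' (negbTE (partition_neq0 partQ QX')).
Qed.

Lemma pblock_extend_z : pblock (extend Q X) z = z |: h @: X.
Proof. by rewrite (def_pblock (partition_trivIset partition_extend) (setU11 _ _)) ?setU11. Qed.

Lemma pblock_extend a :
  pblock (extend Q X) (h a) = if a \in X then z |: h @: X else h @: pblock Q a.
Proof.
have triv := partition_trivIset partition_extend.
have Qa : a \in cover Q by rewrite (cover_partition partQ).
case: ifP => aX; apply: def_pblock => //.
- by rewrite setU11.
- by rewrite in_setU1 mem_imset // aX orbT.
- rewrite in_setU1 (mem_imset _ _ (imset_inj h_inj)) !inE pblock_mem // andbT.
  by apply/orP; right; apply: contraFneq aX => <-; rewrite mem_pblock.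
- by rewrite mem_imset // mem_pblock.
Qed.

Lemma zblock_extend : zblock (extend Q X) = X.
Proof. by rewrite /zblock pblock_extend_z preimset_zblock. Qed.

Lemma restrict_extend : restrict (extend Q X) = Q.
Proof.
rewrite /restrict imsetU1 preimset_zblock -imset_comp.
rewrite (eq_imset _ preimset_imset) imset_id.
case/setU1P: QX => [->|QX']; first by rewrite setU1K ?setD1_set0 // (partition0 partQ).
by rewrite setD1K // setD1_set0.
Qed.

Lemma pblock_extend_neq a0 a1 : pblock Q a0 != pblock Q a1 ->
  pblock (extend Q X) (h a0) != pblock (extend Q X) (h a1).
Proof.
have coverQ a : a \in cover Q by rewrite (cover_partition partQ).
rewrite !pblock_extend; case: ifP => a0X; case: ifP => a1X.
- have QX' : X \in Q by case/setU1P: QX => // X0; rewrite X0 inE in a0X.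
  have triv := partition_trivIset partQ.
  by rewrite (def_pblock triv QX' a0X) (def_pblock triv QX' a1X) eqxx.
- by move=> _; apply: contraNneq (z_notin_imset (pblock Q a1)) => <-; rewrite setU11.
- by move=> _; apply: contraNneq (z_notin_imset (pblock Q a0)) => ->; rewrite setU11.
- by rewrite (inj_eq (imset_inj h_inj)).
Qed.

End Extend.

Section Restrict.

Variable P : {set {set B}}.
Hypothesis partP : partition P [set: B].

Let coverP b : b \in cover P.
Proof. by rewrite (cover_partition partP). Qed.

Lemma preimset_pblock_restrict a : h @^-1: pblock P (h a) \in restrict P.
Proof.
rewrite !inE imset_f ?pblock_mem // andbT.
by apply/set0Pn; exists a; rewrite inE mem_pblock.
Qed.

Lemma partition_restrict : partition (restrict P) [set: A].
Proof.
apply/and3P; split; last by rewrite !inE eqxx.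
- apply/eqP/setP => a; rewrite inE; apply/bigcupP.
  by exists (h @^-1: pblock P (h a)); rewrite ?preimset_pblock_restrict // inE mem_pblock.
- apply/trivIsetP => _ _ /setD1P[_ /imsetP[Y PY ->]] /setD1P[_ /imsetP[Y' PY' ->]] neqYY'.
  have /trivIsetP/(_ Y Y' PY PY') := partition_trivIset partP.
  have -> : Y != Y' by apply: contraNneq neqYY' => ->.
  by rewrite -!setI_eq0 -preimsetI => /(_ isT)/eqP->; rewrite preimset0.
Qed.

Lemma pblock_restrict a : pblock (restrict P) a = h @^-1: pblock P (h a).
Proof.
apply: def_pblock; first exact: partition_trivIset partition_restrict.
  exact: preimset_pblock_restrict.
by rewrite inE mem_pblock.
Qed.

Lemma pblock_restrict_neq a0 a1 : pblock P (h a0) != pblock P (h a1) ->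
  pblock (restrict P) a0 != pblock (restrict P) a1.
Proof.
apply: contra; rewrite !pblock_restrict => /eqP E.
have : a1 \in h @^-1: pblock P (h a0) by rewrite E inE mem_pblock.
by rewrite eq_pblock ?(partition_trivIset partP) // inE.
Qed.

Lemma zblock_mem : zblock P \in set0 |: restrict P.
Proof.
case: (eqVneq (zblock P) set0) => [->|Z0]; first exact: setU11.
by rewrite in_setU1 in_setD1 Z0 /zblock imset_f ?pblock_mem ?orbT.
Qed.

Lemma extend_restrict : extend (restrict P) (zblock P) = P.
Proof.
have [partR Zmem] := (partition_restrict, zblock_mem).
have triv := partition_trivIset partP.
have Zz : z \in pblock P z by rewrite mem_pblock.
apply: partition_pblock_eq (partition_extend partR Zmem) partP _ => b _.
case: (eqVneq b z) => [->|/h_onto[a ->]].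
  by rewrite (pblock_extend_z partR Zmem) (imset_preimset (pblock P z)) setD1K.
rewrite (pblock_extend partR Zmem) inE; case: ifP => aZ.
  rewrite (imset_preimset (pblock P z)) setD1K //.
  exact/esym/(def_pblock triv (pblock_mem (coverP z)) aZ).
rewrite pblock_restrict imset_preimset; apply/setP => b'; rewrite !inE.
case: eqVneq => //= ->; apply/esym; apply: contraFF aZ => zZ.
by rewrite (def_pblock triv (pblock_mem (coverP (h a))) zZ) mem_pblock.
Qed.

End Restrict.

Variables a0 a1 : A.

Lemma extend_sep_partitions k Q X : Q \in sep_partitions a0 a1 k -> X \in set0 |: Q ->
  extend Q X \in sep_partitions (h a0) (h a1) (k + (X == set0)).
Proof.
move=> + QX; rewrite !inE => /and3P[partQ /eqP <- sepQ].
by rewrite partition_extend // card_extend // eqxx pblock_extend_neq.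
Qed.

Lemma restrict_sep_partitions k P : P \in sep_partitions (h a0) (h a1) k ->
  restrict P \in sep_partitions a0 a1 (k - (zblock P == set0)).
Proof.
rewrite !inE => /and3P[partP /eqP <- sepP].
rewrite partition_restrict // pblock_restrict_neq // andbT.
have := card_extend (partition_restrict partP) (zblock_mem partP).
by rewrite extend_restrict // => ->; rewrite addnK eqxx.
Qed.

Definition fresh_block_pairs k : {set {set {set A}} * {set A}} :=
  [set (Q, set0) | Q in sep_partitions a0 a1 k].

Definition marked_block_pairs k : {set {set {set A}} * {set A}} :=
  [set p | (p.1 \in sep_partitions a0 a1 k) && (p.2 \in p.1)].

Lemma sep_partitions_extend k : sep_partitions (h a0) (h a1) k.+1 =
  [set extend p.1 p.2 | p in fresh_block_pairs k :|: marked_block_pairs k.+1].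
Proof.
apply/setP => P; apply/idP/imsetP => [SP | [[Q X]]].
  have partP : partition P [set: B] by move: SP; rewrite inE => /andP[].
  exists (restrict P, zblock P); last by rewrite extend_restrict.
  have := restrict_sep_partitions SP; case/setU1P: (zblock_mem partP) => [Z0|ZR].
    by rewrite Z0 eqxx subn1 => SR; apply/setUP; left; apply/imsetP; exists (restrict P).
  rewrite (negbTE (partition_neq0 (partition_restrict partP) ZR)) subn0 => SR.
  by apply/setUP; right; rewrite inE SR.
case/setUP => [/imsetP[Q' SQ [-> ->]] ->|].
  by have := extend_sep_partitions SQ (setU11 _ _); rewrite eqxx addn1.
rewrite inE => /andP[SQ QX] ->; have := extend_sep_partitions SQ (setU1r _ QX).
by move: SQ; rewrite inE => /andP[partQ _]; rewrite (negbTE (partition_neq0 partQ QX)) addn0.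
Qed.

Lemma card_sep_partitions_extend k : #|sep_partitions (h a0) (h a1) k.+1| =
  #|sep_partitions a0 a1 k| + k.+1 * #|sep_partitions a0 a1 k.+1|.
Proof.
have pair_partition Q X : (Q, X) \in fresh_block_pairs k :|: marked_block_pairs k.+1 ->
    partition Q [set: A] /\ X \in set0 |: Q.
  case/setUP => [/imsetP[Q' + [-> ->]]|]; rewrite !inE.
    by case/andP=> ->; rewrite eqxx.
  by case/andP=> /andP[-> _] ->; rewrite orbT.
rewrite sep_partitions_extend card_in_imset; last first.
  move=> [Q X] [Q' X'] /pair_partition[pQ QX] /pair_partition[pQ' QX'] /= E.
  have := congr1 (fun P => (restrict P, zblock P)) E.
  rewrite /= (restrict_extend pQ QX) (zblock_extend pQ QX).
  by rewrite (restrict_extend pQ' QX') (zblock_extend pQ' QX').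
have disjoint_pairs : fresh_block_pairs k :&: marked_block_pairs k.+1 = set0.
  apply/setP => -[Q X]; rewrite !inE; apply/negP => /andP[/imsetP[Q' _ [-> ->]]].
  by case/andP => /and3P[/partition0 ->].
rewrite cardsU disjoint_pairs cards0 subn0 card_imset => [|Q Q' []//].
rewrite /marked_block_pairs (card_dep_pairs _ id) (eq_bigr (fun=> k.+1)) => [|Q].
  by rewrite sum_nat_const mulnC.
by rewrite inE => /and3P[_ /eqP].
Qed.

End Extension.

Lemma rstirling2_sep n k :
  rstirling2 2 n.+2 k = #|sep_partitions (ord0 : 'I_n.+2) (inord 1) k|.
Proof.
have val1 : (inord 1 : 'I_n.+2) = 1 :> nat by rewrite inordK.
apply: eq_card => P; rewrite !inE; case: (partition P _) (#|P| == k) => //= [] [] //=.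
apply/forallP/idP => [/(_ ord0)/forallP/(_ (inord 1))/implyP|sepP i].
  by apply; rewrite val1 -val_eqE /= val1.
have ord01 (x : 'I_n.+2) : x < 2 -> x = ord0 \/ x = inord 1.
  by case: x => -[|[|x]] //= ltx _; [left|right]; apply: val_inj.
apply/forallP => j; apply/implyP => /andP[/andP[/ord01 + /ord01 +] ij].
case=> Ei [] Ej; rewrite Ei Ej ?eqxx in ij * => //.
by rewrite eq_sym.
Qed.

Lemma card_sep_partitions_lift n k :
  #|sep_partitions (ord0 : 'I_n.+3) (inord 1) k.+1| =
  #|sep_partitions (ord0 : 'I_n.+2) (inord 1) k| +
  k.+1 * #|sep_partitions (ord0 : 'I_n.+2) (inord 1) k.+1|.
Proof.
have lift0 : lift ord_max (ord0 : 'I_n.+2) = ord0 by apply: val_inj.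
have lift1 : lift ord_max (inord 1 : 'I_n.+2) = inord 1.
  by apply: val_inj; rewrite /= /bump !inordK.
rewrite -[in LHS]lift0 -[in LHS]lift1; apply: (@card_sep_partitions_extend _ _ _ ord_max).
- exact: lift_inj.
- by move=> a; rewrite lift_eqF.
- by move=> b; rewrite eq_sym => /unlift_some[a -> _]; exists a.
Qed.

Lemma card_sep_partitions_ord2 k :
  #|sep_partitions (ord0 : 'I_2) (inord 1) k| = (k == 2).
Proof.
have -> : inord 1 = ord_max :> 'I_2 by apply: val_inj; rewrite /= inordK.
have ord01 (x : 'I_2) : x = ord0 \/ x = ord_max.
  by case: x => -[|[|x]] //= ltx; [left|right]; apply: val_inj.
pose D := preim_partition id [set: 'I_2].
have partD : partition D [set: 'I_2] := preim_partitionP _ _.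
have pblockD x : pblock D x = [set x].
  apply/setP => y; rewrite inE pblock_equivalence_partition // ?eq_sym //.
  by split=> // /eqP ->.
have cardD : #|D| = 2.
  rewrite card_imset ?cardsT ?card_ord // => x y /setP/(_ y).
  by rewrite !inE eqxx => /eqP.
have sep_D P : partition P [set: 'I_2] -> pblock P ord0 != pblock P ord_max -> P = D.
  move=> partP sepP; apply: (partition_pblock_eq partP partD) => x _.
  rewrite pblockD; apply/setP => y; rewrite inE.
  have Px : x \in cover P by rewrite (cover_partition partP).
  case: eqVneq => [->|yx]; first by rewrite mem_pblock.
  rewrite -eq_pblock ?(partition_trivIset partP) //; apply: contraNF sepP.
  by case: (ord01 x) (ord01 y) yx => -> [] -> yx Exy //; rewrite ?eqxx // eq_sym in Exy.
case: eqVneq => [->|k2]; last first.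
  apply/eqP; rewrite cards_eq0; apply/eqP/setP => P; rewrite !inE.
  apply/negP => /and3P[partP /eqP cardP /(sep_D _ partP) PD].
  by rewrite -cardP PD cardD eqxx in k2.
rewrite -[RHS]/1 -[RHS](cards1 D); apply: eq_card => P; rewrite !inE.
apply/idP/eqP => [/and3P[partP _ /(sep_D _ partP)] //|->].
by rewrite partD cardD !pblockD (inj_eq set1_inj).
Qed.

Fixpoint stirl2 n k :=
  match n, k with
  | 0, _ => k == 2 : nat
  | n'.+1, 0 => 0
  | n'.+1, k'.+1 => stirl2 n' k' + k'.+1 * stirl2 n' k'.+1
  end.

Lemma rstirling2E n k : rstirling2 2 (n + 2) k = stirl2 n k.
Proof.
rewrite addn2 rstirling2_sep; elim: n k => [|n IHn] k; first exact: card_sep_partitions_ord2.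
by case: k => [|k]; rewrite /= ?sep_partitions0 ?cards0 // card_sep_partitions_lift !IHn.
Qed.

Lemma stirl2_eq0 n k : n.+2 < k -> stirl2 n k = 0.
Proof.
elim: n k => [|n IHn] [|k] //=; first by case: k => [|[]].
by move=> ltnk; rewrite !IHn ?muln0 // ltnW.
Qed.

Lemma dvdn_fact_fact m n : m <= n -> m`! %| n`!.
Proof. by move=> le_mn; rewrite -(ffact_fact (leq_subr m n)) subKn // dvdn_mull. Qed.

Lemma rfubini2E n : rfubini n 2 = \sum_(2 <= j < n.+3) j`! * stirl2 n j.
Proof.
rewrite -[2]add0n big_addn !subSS subn0.
by apply: eq_bigr => k _; rewrite rstirling2E.
Qed.

Definition fubini_state n : seq nat := [seq j`! * stirl2 n j %% 64 | j <- iota 0 8].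

Definition fubini_step (s : seq nat) : seq nat :=
  [seq j * (nth 0 s j.-1 + nth 0 s j) %% 64 | j <- iota 0 8].

Lemma nth_fubini_state n j : j < 8 -> nth 0 (fubini_state n) j = j`! * stirl2 n j %% 64.
Proof. by move=> ltj8; rewrite (nth_map 0) ?size_iota // nth_iota. Qed.

Lemma fubini_stateS n : fubini_state n.+1 = fubini_step (fubini_state n).
Proof.
apply/eq_in_map => -[|j]; rewrite mem_iota // add0n => ltj8.
rewrite !nth_fubini_state ?(ltnW ltj8) //=.
have -> a b : j.+1 * (a %% 64 + b %% 64) = j.+1 * (a + b) %[mod 64].
  by rewrite -modnMmr modnDm modnMmr.
by rewrite factS; congr (_ %% 64); ring.
Qed.

Lemma fubini_stateE n : fubini_state n = iter n fubini_step (fubini_state 0).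
Proof. by elim: n => //= n <-; rewrite fubini_stateS. Qed.

Definition fubini64 n := sumn (drop 2 (iter n fubini_step (fubini_state 0))) %% 64.

Lemma rfubini_mod64 n : rfubini n 2 %% 64 = fubini64 n.
Proof.
rewrite /fubini64 -fubini_stateE /fubini_state -map_drop drop_iota sumnE big_map.
rewrite rfubini2E.
have -> : \sum_(2 <= j < n.+3) j`! * stirl2 n j = \sum_(2 <= j < n + 8) j`! * stirl2 n j.
  rewrite (big_cat_nat (_ : 2 <= n.+3) (_ : n.+3 <= n + 8)) //=; last by rewrite -addn3 leq_add2l.
  rewrite [X in _ + X]big_nat_cond [X in _ + X]big1 ?addn0 // => j.
  by rewrite andbT => /andP[/stirl2_eq0 -> _]; rewrite muln0.
rewrite (big_cat_nat (_ : 2 <= 8)) ?leq_addl //= -modnDmr.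
have /eqP -> : (\sum_(8 <= j < n + 8) j`! * stirl2 n j) %% 64 == 0.
  rewrite -/(64 %| _) big_nat_cond dvdn_sum // => j /andP[/andP[le8j _] _].
  by rewrite dvdn_mulr // (dvdn_trans _ (dvdn_fact_fact le8j)).
by rewrite addn0 modn_summ.
Qed.

Lemma fubini_iter_period n q : 5 <= n ->
  iter (n + q * 8) fubini_step (fubini_state 0) = iter n fubini_step (fubini_state 0).
Proof.
have period m : 5 <= m ->
    iter (m + 8) fubini_step (fubini_state 0) = iter m fubini_step (fubini_state 0).
  by move=> le5m; rewrite -(subnK le5m) -addnA !iterD; congr iter; vm_compute.
move=> le5n; elim: q => [|q IHq]; first by rewrite addn0.
by rewrite mulSn addnA addnAC period ?IHq // (leq_trans le5n (leq_addr _ _)).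
Qed.

Lemma fubini64_period2 n : 5 <= n -> fubini64 (n + 2) = fubini64 n.
Proof.
move=> le5n; have [r ltr8 ->] : exists2 r, r < 8 & n = 5 + r + (n - 5) %/ 8 * 8.
  by exists ((n - 5) %% 8); rewrite ?ltn_mod // -addnA [_ %% 8 + _]addnC -divn_eq subnKC.
rewrite /fubini64 addnAC !fubini_iter_period ?addnA ?leq_addr //.
by case: r ltr8 => [|[|[|[|[|[|[|[|r]]]]]]]] // _; vm_compute.
Qed.

Lemma fubini64_small n m : 2 <= n < 5 -> 3 <= m <= n.+1 ->
  fubini64 (n + 2) = fubini64 n %[mod 2 ^ m].
Proof.
by case: n => [|[|[|[|[|n]]]]] // _; case: m => [|[|[|[|[|[|m]]]]]] // _; vm_compute.
Qed.

Unset Implicit Arguments.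

Theorem theorem4p1 (m n : nat) :
  3 <= m <= 6 -> m - 1 <= n ->
  rfubini (n + 2) 2 = rfubini n 2 %[mod 2 ^ m].
Proof.
move=> /andP[le3m le6m] lemn.
have dvd64 : 2 ^ m %| 64 by rewrite (dvdn_exp2l 2 le6m).
rewrite -(modn_dvdm (rfubini (n + 2) 2) dvd64) -(modn_dvdm (rfubini n 2) dvd64).
rewrite !rfubini_mod64; have [ltn5|le5n] := ltnP n 5; last by rewrite fubini64_period2.
by apply: fubini64_small; lia.
Qed.
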